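(* Let $C:\mathbb Z^d\times\mathbb Z^d\to[0,\infty)$ satisfy (A2) and (A3). Then there exist $\gamma\in(0,1)$, $\Theta_1>0$ and $\kappa_3>0$, depending only on $\kappa_1,\kappa_2,N_0,d,\alpha$, such that for all $x\in\mathbb Z^d$ and $r>\Theta_1$, $$\mu(\{y\in B^1(x,r):C(x,y)\ge\kappa_3|x-y|^{-d-\alpha}\})\ge\gamma\,\mu(B^1(x,r)).$$ In particular, if $C(x,y)=\widetilde C(x-y)$ for some function $\widetilde C$, then $\mu(\{h\in B^1(0,r):\widetilde C(h)\ge\kappa_3|h|^{-d-\alpha}\})\ge\gamma\,\mu(B^1(0,r))$ for all $r>\Theta_1$.
   Context: Fix $d\ge1$, $\alpha\in(0,2)$. $\mu$ is counting measure; $B^1(x,r)=\{y\in\mathbb Z^d:|x-y|<r\}$. (A2) There is $\kappa_1>0$ with $C(x,y)\le\kappa_1|x-y|^{-d-\alpha}$ for all $x\ne y$. (A3) There are $N_0\in\mathbb N$, $\kappa_2>0$ such that for all $x\ne y$ in $\mathbb Z^d$ there are $z_0^{(x,y)}=x,\dots,z_l^{(x,y)}=y$ in $\mathbb Z^d$, $l\le N_0$, with $C(z_i^{(x,y)},z_{i+1}^{(x,y)})\ge\kappa_2|x-y|^{-d-\alpha}$ for $i<l$; and for every pair $(\zeta,\xi)$ at most $N_0$ pairs $(x,y)$ satisfy $\zeta=z_k^{(x,y)},\xi=z_{k+1}^{(x,y)}$ for some $k$. *)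

From HB Require Import structures.
From mathcomp Require Import all_boot all_order all_algebra.
From mathcomp Require Import all_classical all_reals all_analysis.
Set Implicit Arguments. Unset Strict Implicit. Unset Printing Implicit Defensive.
Import Order.TTheory GRing.Theory Num.Theory.
Local Open Scope ring_scope.
Local Open Scope classical_set_scope.

Definition pt (d : nat) := 'rV[int]_d.

Definition znorm (R : realType) (d : nat) (h : pt d) : R :=
  Num.sqrt (\sum_(i < d) ((h ord0 i)%:~R) ^+ 2).

Definition kern (R : realType) (d : nat) (alpha : R) (x y : pt d) : R :=
  (znorm R (x - y)) `^ (- (d%:R + alpha)).

Definition ball1 (R : realType) (d : nat) (x : pt d) (r : R) : set (pt d) :=
  [set y | znorm R (x - y) < r].

Definition mu (R : realType) (d : nat) (A : set (pt d)) : \bar R := counting A.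

Definition A2 (R : realType) (d : nat) (alpha : R) (C : pt d -> pt d -> R)
    (kappa1 : R) : Prop :=
  forall x y : pt d, x != y -> C x y <= kappa1 * kern alpha x y.

(* (A3): z (x,y) is the list [z_1; ...; z_l] of the path
   x = z_0, z_1, ..., z_l = y (so l = size (z x y)). *)
Definition A3 (R : realType) (d : nat) (alpha : R) (C : pt d -> pt d -> R)
    (N0 : nat) (kappa2 : R) : Prop :=
  exists z : pt d -> pt d -> seq (pt d),
    (forall x y : pt d, x != y ->
       [/\ last x (z x y) = y,
           (size (z x y) <= N0)%N &
           forall k : nat, (k < size (z x y))%N ->
             kappa2 * kern alpha x y <= C (nth x (x :: z x y) k) (nth x (z x y) k)])
    /\
    (forall zeta xi : pt d,
       (@counting _ R) [set xy : pt d * pt d | xy.1 != xy.2 /\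
              exists2 k : nat, (k < size (z xy.1 xy.2))%N &
                zeta = nth xy.1 (xy.1 :: z xy.1 xy.2) k /\
                xi = nth xy.1 (z xy.1 xy.2) k]
       <= (N0%:R)%:E)%E.

From HB Require Import structures.
From mathcomp Require Import all_boot all_order all_algebra.
From mathcomp Require Import all_classical all_reals all_analysis.
From mathcomp Require Import finmap zify ring lra.
Import Order.TTheory GRing.Theory Num.Theory.
Set Implicit Arguments. Unset Strict Implicit. Unset Printing Implicit Defensive.
Local Open Scope ring_scope.
Local Open Scope classical_set_scope.

(* Fix x and r, and put L = 1 + kappa1/kappa2, rho = r/L.  For y <> x in B(x, rho) let w be
   the first step of the (A3)-path from x to y, so that C(x,w) >= kappa2 |x-y|^(-d-alpha).
   The upper bound (A2) then forces |x-w| < L |x-y| < r.  Either w lies in the inner ball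
   B(x, rho/M), or |x-y| < rho <= M |x-w| and C(x,w) >= kappa2 M^(-d-alpha) |x-w|^(-d-alpha),
   i.e. w is a good neighbour of x.  By (A3) the map y |-> w is at most N0-to-one, whence
   #B(x,rho) <= 1 + N0 (#B(x,rho/M) + #good).  Since #B(x,s) is comparable to s^d, the choice
   M = 12 d (N0+1) makes the inner ball negligible, and #good >= gamma #B(x,r).  The
   translation-invariant case is the case x = 0, up to the reflection h |-> -h. *)

Section Counting.
Variable R : realType.

Lemma le_counting (T : choiceType) (A B : set T) :
  A `<=` B -> (@counting T R A <= counting B)%E.
Proof.
move=> AB; rewrite /counting.
case: (asboolP (finite_set B)) => fB; last by rewrite leey.
have fA : finite_set A by exact: sub_finite_set fB.
by rewrite asboolT // lee_fin ler_nat fsubset_leq_card // -fset_set_sub.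
Qed.

Lemma counting_image (T U : choiceType) (f : T -> U) (A : set T) :
  injective f -> @counting U R (f @` A) = counting A.
Proof.
move=> f_inj; rewrite /counting (eq_finite_set (inj_card_eq (in2W f_inj))).
case: asboolP => // finA.
by rewrite fset_set_image // card_imfset.
Qed.

Lemma counting_finpred (K : finType) (P : pred K) :
  @counting K R [set k | P k] = (#|P|%:R)%:E.
Proof.
rewrite /counting asboolT; last exact: finite_finset.
have -> : fset_set [set k | P k] = [fset k in P]%fset.
  apply/fsetP => k; rewrite in_fset_set; last exact: finite_finset.
  by rewrite !inE; apply/idP/idP => [/set_mem|/mem_set].
by rewrite card_finset.
Qed.

End Counting.

Lemma card_le_mul_fibres (T T' : finType) (f : T -> T') (A : {pred T})
    (B : {pred T'}) (n : nat) :
  {in A, forall k, f k \in B} -> (forall j, #|[pred k in A | f k == j]| <= n)%N ->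
  (#|A| <= n * #|B|)%N.
Proof.
move=> fAB fibre; rewrite -sum1_card (partition_big f (mem B)) //=.
rewrite mulnC -sum_nat_const; apply: leq_sum => j _.
rewrite sum1dep_card; apply: leq_trans (fibre j).
by apply: subset_leq_card; apply/fintype.subsetP => k; rewrite !inE.
Qed.

Section Cube.
Variables d n : nat.

(* [cube d n] indexes, through [cube_pt x], the lattice points within sup-distance [n] of
   [x]; on sets inside such a box the counting measure is a cardinality over a finType. *)
Definition cube := {ffun 'I_d -> 'I_(n.*2.+1)}.

Definition cube_pt (x : pt d) (k : cube) : pt d := x + \row_i ((k i : nat)%:Z - n%:Z).

Definition cube_index (x y : pt d) : cube :=
  [ffun i => inord (absz ((y - x) ord0 i + n%:Z))].

Lemma card_cube : #|{: cube}| = (n.*2.+1 ^ d)%N.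
Proof. by rewrite card_ffun !card_ord. Qed.

Lemma cube_pt_inj (x : pt d) : injective (cube_pt x).
Proof.
move=> k1 k2 /addrI /matrixP k12; apply/ffunP => i; apply/val_inj.
by have := k12 ord0 i; rewrite !mxE => /eqP; rewrite (can_eq (addrK _)) => /eqP [].
Qed.

Lemma cube_pt_coord (x : pt d) k i : `|(cube_pt x k - x) ord0 i| <= n%:Z.
Proof. by rewrite /cube_pt addrC addKr mxE; have := ltn_ord (k i); lia. Qed.

Lemma cube_indexK (x y : pt d) :
  (forall i, `|(y - x) ord0 i| <= n%:Z) -> cube_pt x (cube_index x y) = y.
Proof.
move=> yx; apply/matrixP => a i; rewrite (ord1 a) !mxE ffunE.
have := yx i; rewrite !mxE; set w := y ord0 i - x ord0 i => wn.
rewrite inordK; last by lia.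
have -> : (absz (w + n%:Z))%:Z = w + n%:Z by lia.
by rewrite addrK /w addrC subrK.
Qed.

End Cube.

Section Norm.
Variables (R : realType) (d : nat).
Implicit Types v : pt d.

Lemma znorm_ge0 v : 0 <= znorm R v.
Proof. exact: sqrtr_ge0. Qed.

Lemma znorm0 : znorm R (0 : pt d) = 0.
Proof. by rewrite /znorm big1 ?sqrtr0 // => i _; rewrite mxE expr0n. Qed.

Lemma znormN v : znorm R (- v) = znorm R v.
Proof.
by rewrite /znorm; congr Num.sqrt; apply: eq_bigr => i _; rewrite mxE mulrNz sqrrN.
Qed.

Lemma znormB (x y : pt d) : znorm R (x - y) = znorm R (y - x).
Proof. by rewrite -znormN opprB. Qed.

Lemma ler_coord_znorm v i : (`|v ord0 i|%:~R : R) <= znorm R v.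
Proof.
rewrite /znorm intr_norm -sqrtr_sqr ler_sqrt; last by apply: sumr_ge0 => j _; exact: sqr_ge0.
by rewrite (bigD1 i) //= lerDl; apply: sumr_ge0 => j _; exact: sqr_ge0.
Qed.

Lemma znorm_gt0 v : v != 0 -> 0 < znorm R v.
Proof.
move=> v0; have [i vi0] : exists i, v ord0 i != 0.
  apply/existsP; apply: contraR v0 => /existsPn v0; apply/eqP/matrixP => a i.
  by rewrite (ord1 a) mxE; apply/eqP; rewrite -[_ == _]negbK v0.
by apply: lt_le_trans (ler_coord_znorm v i); rewrite ltr0z normr_gt0.
Qed.

Lemma znorm_le_coord v (m : nat) :
  (forall i, `|v ord0 i| <= m%:Z) -> znorm R v <= d%:R * m%:R.
Proof.
move=> vm; rewrite /znorm -[X in _ <= X]ger0_norm ?mulr_ge0 // -sqrtr_sqr.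
rewrite ler_sqrt ?sqr_ge0 //; apply: (@le_trans _ _ (d%:R * (m%:R : R) ^+ 2)).
  rewrite -[d in X in X * _]card_ord mulr_natl -sumr_const.
  apply: ler_sum => i _.
  rewrite -real_normK ?num_real // lerXn2r ?nnegrE // -intr_norm.
  by rewrite -[m%:R]/((m%:Z)%:~R) ler_int.
rewrite exprMn ler_wpM2r ?sqr_ge0 //.
by case: d => [|d']; rewrite ?expr0n // ler_eXnr // ler1n.
Qed.

End Norm.

Section Balls.
Variables (R : realType) (d : nat).
Implicit Types (x y : pt d) (s : R).

Lemma le_ball1 x s s' : s <= s' -> ball1 x s `<=` ball1 x s'.
Proof. by move=> ss' y /lt_le_trans; apply. Qed.

Lemma ball1_coord_le x s y :
  ball1 x s y -> forall i, `|(y - x) ord0 i| <= (Num.truncn s)%:Z.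
Proof.
rewrite /ball1 /= znormB => ys i.
have s0 : 0 <= s by apply: ltW; apply: le_lt_trans ys; exact: znorm_ge0.
have /andP[_ s_lt] := truncn_itv s0.
have : (`|(y - x) ord0 i|%:~R : R) < (Num.truncn s).+1%:R.
  by apply: le_lt_trans (ler_coord_znorm _ _ _) (lt_trans ys s_lt).
rewrite -[_.+1%:R]/(((Num.truncn s).+1%:Z)%:~R) ltr_int.
set c := (y - x) ord0 i; set t := Num.truncn s; lia.
Qed.

Lemma counting_in_ball x (r : R) (S : set (pt d)) : S `<=` ball1 x r ->
  @counting _ R S = (#|[pred k : cube d (Num.truncn r) | `[< S (cube_pt x k) >]]|%:R)%:E.
Proof.
move=> Sr; rewrite -counting_finpred -(counting_image _ _ (@cube_pt_inj _ _ x)).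
congr counting; apply/seteqP; split => [y Sy|_ [k /asboolP Sk <-]] //.
have yx := ball1_coord_le (Sr _ Sy).
by exists (cube_index _ x y); rewrite /= cube_indexK //; apply/asboolP.
Qed.

Lemma counting_ball1_le x s : 1 <= s -> (counting (ball1 x s) <= ((3 * s) ^+ d)%:E)%E.
Proof.
move=> s1; rewrite (counting_in_ball (@subset_refl _ (ball1 x s))) lee_fin.
apply: le_trans (_ : #|{: cube d (Num.truncn s)}|%:R <= _); first by rewrite ler_nat max_card.
have /andP[trunc_le _] := truncn_itv (le_trans ler01 s1).
rewrite card_cube natrX lerXn2r ?nnegrE //; first by lra.
by rewrite -addn1 -muln2 natrD natrM; lra.
Qed.

Lemma counting_ball1_ge x s : (0 < d)%N -> 2 * d%:R < s ->
  (((s / d%:R) ^+ d)%:E <= counting (ball1 x s))%E.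
Proof.
move=> d_gt0 ds; set u := s / d%:R.
have d_pos : (0 : R) < d%:R by rewrite ltr0n.
have du : d%:R * u = s by rewrite /u mulrC divfK ?gt_eqF.
have u2 : 2 < u by rewrite /u ltr_pdivlMr // mulrC.
pose m := (Num.truncn (u / 2)).+1.
have /andP[m_le m_gt] : (Num.truncn (u / 2))%:R <= u / 2 < m%:R.
  by apply: truncn_itv; lra.
have m_lt_u : (m%:R : R) < u by rewrite /m -natr1; lra.
apply: le_trans (_ : ((m.*2.+1 ^ d)%N%:R)%:E <= _)%E.
  rewrite lee_fin natrX lerXn2r ?nnegrE //; first lra.
  by rewrite -natr1 -muln2 natrM; lra.
rewrite -card_cube -[#|_|]/#|[pred k : cube d m | true]| -counting_finpred.
rewrite -(counting_image _ _ (@cube_pt_inj _ _ x)); apply: le_counting => _ [k _ <-].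
rewrite /ball1 /= znormB; apply: le_lt_trans (znorm_le_coord _ (cube_pt_coord x k)) _.
by rewrite -du ltr_pM2l.
Qed.

End Balls.

Lemma powRN_le (R : realType) (a b p : R) :
  0 < a -> a <= b -> 0 <= p -> b `^ (- p) <= a `^ (- p).
Proof.
move=> a0 ab p0; have b0 := lt_le_trans a0 ab.
rewrite !powRN lef_pV2 ?posrE ?powR_gt0 //.
by apply: ge0_ler_powR => //; rewrite nnegrE ltW.
Qed.

Lemma lt_of_powRN_le (R : realType) (k1 k2 p a b : R) :
  0 < k1 -> 0 < k2 -> 1 <= p -> 0 < a ->
  k2 * a `^ (- p) <= k1 * b `^ (- p) -> b < (1 + k1 / k2) * a.
Proof.
move=> k1_gt0 k2_gt0 p1 a0 kab; rewrite ltNge; apply/negP => Lab.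
set L := 1 + k1 / k2 in Lab.
have L1 : 1 <= L by rewrite lerDl divr_ge0 // ltW.
have : k2 * a `^ (- p) <= k1 * (a `^ (- p) * L `^ (- p)).
  apply: le_trans kab _; rewrite ler_pM2l // -powRM; [|exact: ltW|lra].
  by apply: powRN_le; [rewrite mulr_gt0 //; lra | rewrite mulrC | lra].
rewrite [k2 * _]mulrC [k1 * _]mulrCA ler_pM2l ?powR_gt0 // powRN.
rewrite ler_pdivlMr ?powR_gt0 //; last lra.
move=> k2L; have : k2 * L <= k1.
  by apply: le_trans k2L; rewrite ler_pM2l //; exact: le1r_powR.
by rewrite /L mulrDr mulr1 mulrCA divff ?gt_eqF // mulr1 gerDr leNgt k2_gt0.
Qed.

Section KernelComparison.
Variables (R : realType) (d : nat) (alpha kappa1 kappa2 : R).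
Variable C : pt d -> pt d -> R.
Hypotheses (d_gt0 : (0 < d)%N) (alpha_gt0 : 0 < alpha).
Hypotheses (kappa1_gt0 : 0 < kappa1) (kappa2_gt0 : 0 < kappa2).
Variables x y w : pt d.
Hypotheses (yx : y != x) (Cxw : kappa2 * kern alpha x y <= C x w).

Let xy_gt0 : 0 < znorm R (x - y).
Proof. by apply: znorm_gt0; rewrite subr_eq0 eq_sym. Qed.

Lemma first_step_near :
  A2 alpha C kappa1 -> znorm R (x - w) < (1 + kappa1 / kappa2) * znorm R (x - y).
Proof.
move=> hA2; have [->|wx] := eqVneq w x.
  by rewrite subrr znorm0 mulr_gt0 // ltr_wpDr ?divr_ge0 ?ltW.
apply: (lt_of_powRN_le (p := d%:R + alpha) kappa1_gt0 kappa2_gt0 _ xy_gt0).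
  by apply: le_trans (_ : 1 <= d%:R) _; rewrite ?ler1n // lerDl ltW.
by apply: le_trans Cxw (hA2 _ _ _); rewrite eq_sym.
Qed.

Lemma first_step_good (M : R) : 0 < M -> znorm R (x - y) <= M * znorm R (x - w) ->
  kappa2 * M `^ (- (d%:R + alpha)) * kern alpha x w <= C x w.
Proof.
move=> M_gt0 xyw; apply: le_trans Cxw; rewrite -mulrA ler_pM2l // /kern.
rewrite -powRM; [|exact: ltW|exact: znorm_ge0].
by apply: powRN_le xy_gt0 xyw _; rewrite addr_ge0 // ltW.
Qed.

End KernelComparison.

Lemma density_inequality (R : realType) (d : nat) (N u A B G : R) :
  (0 < d)%N -> 1 <= N -> 4 <= u -> u ^+ d <= A -> A <= N * (B + G) + 1 ->
  B <= (u / (4 * N)) ^+ d -> u ^+ d <= 2 * N * G.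
Proof.
move=> d_gt0 N1 u4 uA AN B_le.
have u_le : u <= u ^+ d by rewrite ler_eXnr //; lra.
have NB_le : 4 * N * B <= u ^+ d.
  rewrite -ler_pdivlMl; last lra.
  apply: le_trans B_le _; rewrite expr_div_n mulrC ler_pM2r; last by apply: exprn_gt0; lra.
  by rewrite lef_pV2 ?posrE ?exprn_gt0 ?ler_eXnr //; lra.
set U := u ^+ d in u_le NB_le uA *; set P := N * B in NB_le *; set Q := N * G.
have : A <= P + Q + 1 by rewrite /P /Q -mulrDr.
lra.
Qed.

Definition good_neighbours (R : realType) (d : nat) (alpha : R)
    (C : pt d -> pt d -> R) (k : R) (x : pt d) (r : R) : set (pt d) :=
  [set y | ball1 x r y /\ y != x /\ k * kern alpha x y <= C x y].

Lemma counting_good_neighbours_translation (R : realType) (d : nat) (alpha : R)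
    (C : pt d -> pt d -> R) (Ct : pt d -> R) (k r : R) :
  (forall x y, C x y = Ct (x - y)) ->
  @counting _ R (good_neighbours alpha C k 0 r) =
  counting (good_neighbours alpha (fun=> Ct) k 0 r).
Proof.
move=> C_Ct; rewrite -(counting_image _ _ (@oppr_inj _)); congr counting.
have ball_kern (h : pt d) :
    ball1 0 r (- h) = ball1 0 r h /\ kern alpha 0 (- h) = kern alpha 0 h.
  by rewrite /ball1 /kern /= !sub0r opprK znormN.
rewrite /good_neighbours; apply/seteqP; split => [_ [y [y_r [y0 ky]] <-]|h [h_r [h0 kh]]] /=.
  have [-> ->] := ball_kern y.
  by rewrite oppr_eq0 -[- y]sub0r -C_Ct.
exists (- h); last exact: opprK.
have [-> ->] := ball_kern h.
by rewrite oppr_eq0 C_Ct !sub0r opprK.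
Qed.

Section GoodNeighbours.
Variables (R : realType) (d : nat) (alpha kappa1 kappa2 : R) (N0 : nat).
Variable C : pt d -> pt d -> R.
Hypotheses (d_gt0 : (0 < d)%N) (alpha_gt0 : 0 < alpha).
Hypotheses (kappa1_gt0 : 0 < kappa1) (kappa2_gt0 : 0 < kappa2).
Hypotheses (hA2 : A2 alpha C kappa1) (hA3 : A3 alpha C N0 kappa2).

Let z := sval (cid hA3).
Let z_path := (svalP (cid hA3)).1.
Let z_overlap := (svalP (cid hA3)).2.

Let L := 1 + kappa1 / kappa2.
Let N : R := N0.+1%:R.
Let M : R := (12 * d * N0.+1)%:R.

Variables (x : pt d) (r : R).
Hypothesis r_large : 12 * N * L * d%:R < r.

Let rho := r / L.
Let t := rho / M.
Let good := good_neighbours alpha C (kappa2 * M `^ (- (d%:R + alpha))) x r.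
Let first_step (y : pt d) := nth x (z x y) 0.

Let L_ge1 : 1 <= L. Proof. by rewrite lerDl divr_ge0 // ltW. Qed.
Let L_gt0 : 0 < L. Proof. exact: lt_le_trans ltr01 L_ge1. Qed.
Let N_ge1 : 1 <= N. Proof. by rewrite ler1n. Qed.
Let d_ge1 : (1 : R) <= d%:R. Proof. by rewrite ler1n. Qed.
Let M_gt0 : 0 < M. Proof. by rewrite ltr0n !muln_gt0 d_gt0. Qed.
Let r_gt0 : 0 < r. Proof. by apply: le_lt_trans r_large; rewrite !mulr_ge0 // ltW. Qed.
Let rho_gt0 : 0 < rho. Proof. exact: divr_gt0. Qed.
Let t_gt0 : 0 < t. Proof. exact: divr_gt0. Qed.
Let r_eq : r = L * rho. Proof. by rewrite /rho mulrC divfK // lt0r_neq0. Qed.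
Let rho_eq : rho = M * t. Proof. by rewrite /t mulrC divfK // lt0r_neq0. Qed.
Let rho_le_r : rho <= r. Proof. by rewrite r_eq ler_peMl // ltW. Qed.
Let t_le_rho : t <= rho.
Proof. by rewrite rho_eq ler_peMl ?(ltW t_gt0) // ler1n !muln_gt0 d_gt0. Qed.

Let path_nonempty y : y != x -> (0 < size (z x y))%N.
Proof.
rewrite eq_sym => xy; have [+ _ _] := z_path xy.
rewrite -/z; case: (z x y) => //= x_y.
by rewrite x_y eqxx in xy.
Qed.

Lemma first_step_le_C y : y != x -> kappa2 * kern alpha x y <= C x (first_step y).
Proof.
move=> yx; have xy : x != y by rewrite eq_sym.
have [_ _ edge] := z_path xy; exact: (edge 0%N (path_nonempty yx)).
Qed.

Lemma first_step_in_ball y : y != x -> ball1 x rho y -> ball1 x r (first_step y).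
Proof.
move=> yx y_rho; apply: lt_le_trans (first_step_near d_gt0 alpha_gt0 kappa1_gt0
  kappa2_gt0 yx (first_step_le_C yx) hA2) _.
by rewrite -/L r_eq ler_pM2l // ltW.
Qed.

Lemma first_step_inner_or_good y : y != x -> ball1 x rho y ->
  ball1 x t (first_step y) \/ good (first_step y).
Proof.
move=> yx y_rho; have [w_inner|w_outer] := ltP (znorm R (x - first_step y)) t.
  by left.
right; split; first exact: first_step_in_ball.
split; first by apply: contraTneq w_outer => ->; rewrite subrr znorm0 -ltNge.
apply: (first_step_good alpha_gt0 kappa2_gt0 yx (first_step_le_C yx) M_gt0).
by apply/ltW/(lt_le_trans y_rho); rewrite rho_eq ler_pM2l.
Qed.

Lemma counting_first_step_fibre w :
  (@counting _ R [set y | y != x /\ first_step y = w] <= N0%:R%:E)%E.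
Proof.
have pair_inj : injective (pair x : pt d -> pt d * pt d) by move=> y y' [].
apply: le_trans (z_overlap x w); rewrite -(counting_image _ _ pair_inj).
apply: le_counting => _ [y [yx <-] <-] /=; split; first by rewrite eq_sym.
by exists 0%N; first exact: path_nonempty.
Qed.

Let cnt (S : set (pt d)) : nat :=
  #|[pred k : cube d (Num.truncn r) | `[< S (cube_pt x k) >]]|.

Let counting_cnt (S : set (pt d)) :
  S `<=` ball1 x r -> @counting _ R S = (cnt S)%:R%:E.
Proof. exact: counting_in_ball. Qed.

Lemma card_ball_first_steps :
  (cnt (ball1 x rho) <= N0 * (cnt (ball1 x t) + cnt good) + 1)%N.
Proof.
pose phi := @cube_pt d (Num.truncn r) x.
pose c0 := cube_index (Num.truncn r) x x.
have phi_c0 : phi c0 = x by rewrite /phi /c0 cube_indexK // => i; rewrite subrr mxE normr0.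
pose g k := cube_index (Num.truncn r) x (first_step (phi k)).
pose punctured := [predD1 [pred k | `[< ball1 x rho (phi k) >]] & c0].
have punctured_ball k : punctured k -> phi k != x /\ ball1 x rho (phi k).
  rewrite !inE => /andP[kc0 /asboolP k_rho]; split => //.
  by rewrite -phi_c0 (inj_eq (@cube_pt_inj _ _ x)).
have phi_g k : punctured k -> phi (g k) = first_step (phi k).
  move=> /punctured_ball [kx k_rho]; apply: cube_indexK; apply: ball1_coord_le.
  exact: first_step_in_ball.
rewrite /cnt (cardD1 c0) addnC leq_add ?leq_b1 //.
pose inner := [pred k | `[< ball1 x t (phi k) >]].
pose good_k := [pred k | `[< good (phi k) >]].
apply: (@leq_trans (N0 * #|[predU inner & good_k]|)).
  apply: (card_le_mul_fibres (f := g)) => [k k_punct | j].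
    rewrite !inE /inner /good_k /= (phi_g _ k_punct).
    have [kx k_rho] := punctured_ball _ k_punct.
    by case: (first_step_inner_or_good kx k_rho) => ?; apply/orP; [left|right]; apply/asboolP.
  have fibre_sub : phi @` [set k | [pred k in punctured | g k == j] k] `<=`
      [set y | y != x /\ first_step y = phi j].
    move=> _ [k /andP[k_punct /eqP gkj] <-].
    have [kx _] := punctured_ball _ k_punct.
    by split; last by rewrite -(phi_g _ k_punct) gkj.
  have := le_trans (le_counting _ fibre_sub) (counting_first_step_fibre (phi j)).
  by rewrite counting_image ?counting_finpred ?lee_fin ?ler_nat //; exact: cube_pt_inj.
by rewrite leq_mul2l -cardUI leq_addr orbT.
Qed.

(* The scale in which rho = d u and 3 t = u / (4 N), as [density_inequality] needs. *)
Let u := r / (L * d%:R).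

Let Ld_gt0 : 0 < L * d%:R. Proof. by rewrite mulr_gt0 // ltr0n. Qed.
Let r_u : r = L * d%:R * u. Proof. by rewrite /u mulrC divfK // lt0r_neq0. Qed.
Let u_gt : 12 * N < u. Proof. by rewrite /u ltr_pdivlMr // mulrA. Qed.
Let rho_u : rho = d%:R * u. Proof. by rewrite /rho r_u; field; rewrite lt0r_neq0. Qed.
Let t_u : 3 * t = u / (4 * N).
Proof. by rewrite /t rho_u /M !natrM -/N; field; rewrite nat1r !pnatr_eq0 /= -lt0n d_gt0. Qed.

Let card_ball_rho_ge : u ^+ d <= (cnt (ball1 x rho))%:R.
Proof.
have rho_d : rho / d%:R = u by rewrite rho_u [_ * u]mulrC mulfK // lt0r_neq0 // ltr0n.
have := counting_ball1_ge x d_gt0 (_ : 2 * d%:R < rho).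
rewrite counting_cnt; last exact: le_ball1.
rewrite lee_fin rho_d; apply; rewrite rho_u mulrC ltr_pM2l ?ltr0n //.
by apply: (lt_trans _ u_gt); have := N_ge1; lra.
Qed.

Let card_ball_t_le : (cnt (ball1 x t))%:R <= (u / (4 * N)) ^+ d.
Proof.
have := counting_ball1_le x (_ : 1 <= t).
rewrite counting_cnt; last exact/le_ball1/(le_trans t_le_rho).
rewrite lee_fin t_u.
have N1 := N_ge1; have u12 := u_gt.
by apply; rewrite -(ler_pM2l (_ : 0 < 3)) // mulr1 t_u ler_pdivlMr; lra.
Qed.

Let card_ball_r_le : (cnt (ball1 x r))%:R <= (3 * L * d%:R) ^+ d * u ^+ d.
Proof.
rewrite -exprMn (_ : 3 * L * d%:R * u = 3 * r); last by rewrite r_u; ring.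
have := counting_ball1_le x (_ : 1 <= r); rewrite counting_cnt // lee_fin; apply.
have N1 := N_ge1; have u12 := u_gt; have d1 := d_ge1.
by apply: le_trans (_ : 1 <= u) _; [lra | rewrite r_u ler_peMl ?mulr_ege1 //; lra].
Qed.

Lemma counting_good_neighbours_ge :
  ((2 * N * (3 * L * d%:R) ^+ d)^-1%:E * @counting _ R (ball1 x r) <= counting good)%E.
Proof.
have N1 := N_ge1; have L1 := L_ge1; have d1 := d_ge1; have u12 := u_gt.
have card_ball_rho_le : (cnt (ball1 x rho))%:R <= N * ((cnt (ball1 x t))%:R + (cnt good)%:R) + 1.
  apply: le_trans (_ : (N0 * (cnt (ball1 x t) + cnt good) + 1)%:R <= _).
    by rewrite ler_nat card_ball_first_steps.
  by rewrite natrD natrM natrD lerD2r ler_wpM2r ?ler_nat.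
have uG : u ^+ d <= 2 * N * (cnt good)%:R.
  by apply: (density_inequality d_gt0 N1 _ card_ball_rho_ge card_ball_rho_le card_ball_t_le); lra.
have K_gt0 : 0 < (3 * L * d%:R) ^+ d by rewrite exprn_gt0 //; nra.
rewrite counting_cnt // counting_cnt; last by move=> y [].
rewrite -EFinM lee_fin ler_pdivrMl; last by rewrite mulr_gt0 //; lra.
apply: le_trans card_ball_r_le _.
by rewrite (mulrC (2 * N)) -[X in _ <= X]mulrA ler_pM2l.
Qed.

End GoodNeighbours.

Theorem lemma2p4 (R : realType) (d : nat) (alpha kappa1 kappa2 : R) (N0 : nat) :
  (1 <= d)%N -> 0 < alpha < 2 -> 0 < kappa1 -> 0 < kappa2 ->
  exists gamma Theta1 kappa3 : R,
    [/\ 0 < gamma < 1, 0 < Theta1, 0 < kappa3 &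
      forall C : pt d -> pt d -> R,
        (forall x y, 0 <= C x y) ->
        A2 alpha C kappa1 -> A3 alpha C N0 kappa2 ->
        (forall (x : pt d) (r : R), Theta1 < r ->
           (gamma%:E * mu R (ball1 x r) <=
            mu R [set y | ball1 x r y /\ y != x /\ (kappa3 * kern alpha x y <= C x y)%R])%E)
        /\
        (forall Ct : pt d -> R, (forall x y, C x y = Ct (x - y)) ->
         forall r : R, Theta1 < r ->
           (gamma%:E * mu R (ball1 (0%R : pt d) r) <=
            mu R [set h | ball1 (0%R : pt d) r h /\ h != 0%R /\ (kappa3 * kern alpha (0%R : pt d) h <= Ct h)%R])%E)].
Proof.
move=> d_gt0 /andP[alpha_gt0 _] kappa1_gt0 kappa2_gt0.
set L := 1 + kappa1 / kappa2; set N : R := N0.+1%:R; set M : R := (12 * d * N0.+1)%:R.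
have L1 : 1 <= L by rewrite lerDl divr_ge0 // ltW.
have N1 : 1 <= N by rewrite ler1n.
have d1 : (1 : R) <= d%:R by rewrite ler1n.
have K1 : 1 <= (3 * L * d%:R) ^+ d by apply: exprn_ege1; nra.
exists (2 * N * (3 * L * d%:R) ^+ d)^-1, (12 * N * L * d%:R),
  (kappa2 * M `^ (- (d%:R + alpha))).
split=> [||| C _ hA2 hA3].
- by rewrite invr_gt0 invf_lt1; nra.
- by rewrite !mulr_gt0 //; lra.
- by rewrite mulr_gt0 // powR_gt0 // ltr0n !muln_gt0 d_gt0.
- have good_ge := counting_good_neighbours_ge d_gt0 alpha_gt0 kappa1_gt0 kappa2_gt0 hA2 hA3.
  split => [x r r_gt | Ct C_Ct r r_gt]; first exact: good_ge.
  by rewrite /mu -(counting_good_neighbours_translation _ _ _ C_Ct); exact: good_ge.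
Qed.
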